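(* Let $m\ge 2$ and $r\ge 1$ be integers, and for each $i\in\{1,\dots,r\}$ let $s_i\in\{1,\dots,m-1\}$ be an integer. Let $\widetilde{R}=\mathbb{Q}[x_{i,j}\mid 0\le i\le r,\ 1\le j\le m]$ be the polynomial ring in $(r+1)m$ variables. For each $i\in\{1,\dots,r\}$, writing $s=s_i$, consider the $m$ elements $$x_{i,s}+x_{i,s+1}-x_{i-1,s}-x_{i-1,s+1},\qquad x_{i,s}x_{i,s+1}-x_{i-1,s}x_{i-1,s+1},\qquad x_{i,j}-x_{i-1,j}\ \ (1\le j\le m,\ j\neq s,s+1).$$ Then the sequence of $rm$ elements of $\widetilde{R}$ obtained by listing these elements for $i=1$, then for $i=2$, and so on up to $i=r$, is a regular sequence in $\widetilde{R}$.
   Context: A sequence $f_1,\dots,f_n$ in a commutative ring $A$ is regular if for each $k$ the element $f_k$ is not a zero divisor in $A/(f_1,\dots,f_{k-1})$ and $A/(f_1,\dots,f_n)\neq 0$. (In the paper these elements arise from a resolution $D$ of a closed braid diagram on $m$ strands with $r$ wide edges, the $i$-th wide edge being in position $s_i$; the variables $x_{i,j}$ label the arcs between consecutive wide edges.) *)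

From HB Require Import structures.
From mathcomp Require Import all_boot all_order all_algebra.
From mathcomp Require Import mpoly.
Set Implicit Arguments. Unset Strict Implicit. Unset Printing Implicit Defensive.
Import GRing.Theory.
Local Open Scope ring_scope.

Definition in_ideal (R : comRingType) (fs : seq R) (x : R) : Prop :=
  exists c : seq R, size c = size fs /\
    x = \sum_(i < size fs) c`_i * fs`_i.

Definition regular_seq (R : comRingType) (fs : seq R) : Prop :=
  (forall k : nat, (k < size fs)%N -> forall g : R,
      in_ideal (take k fs) (fs`_k * g) -> in_ideal (take k fs) g)
  /\ ~ in_ideal fs 1.

(* The variable with (0-based) index k of {mpoly rat[n]}, or 0 if k >= n. *)
Definition varX (n k : nat) : {mpoly rat[n]} :=
  match @insub nat (fun k => k < n)%N 'I_n k with
  | Some o => 'X_o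
  | None => 0
  end.

(* x_{i,j}, 0 <= i <= r, 1 <= j <= m, in Q[x_{i,j}] with (r+1)m variables,
   encoded as variable number i*m + (j-1). *)
Definition xv (r m i j : nat) : {mpoly rat[r.+1 * m]} :=
  varX (r.+1 * m) (i * m + (j - 1)).

Definition block (r m : nat) (s : nat -> nat) (i : nat) : seq {mpoly rat[r.+1 * m]} :=
  let si := s i in
  [:: xv r m i si + xv r m i si.+1 - xv r m i.-1 si - xv r m i.-1 si.+1;
      xv r m i si * xv r m i si.+1 - xv r m i.-1 si * xv r m i.-1 si.+1]
  ++ [seq xv r m i j - xv r m i.-1 j | j <- iota 1 m & (j != si) && (j != si.+1)].

Definition the_sequence (r m : nat) (s : nat -> nat) : seq {mpoly rat[r.+1 * m]} :=
  flatten [seq block r m s i | i <- iota 1 r].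

(* Eliminate the variables one wide edge at a time.  An element x_z - a such
   that neither a nor the earlier elements involve x_z is a non-zero-divisor
   modulo the earlier elements, and modulo it every polynomial is congruent to
   its image under x_z := a; so it may be dropped from the sequence once the
   substitution x_z := a is applied to all later elements.  For the i-th wide
   edge at position s, eliminating x_{i,s} with the first element turns the
   second one into -(x_{i,s+1} - p)(x_{i,s+1} - p'), a product of two such
   elements in x_{i,s+1}, a variable that occurs in no later element; the
   elements x_{i,j} - x_{i-1,j} then eliminate the x_{i,j}, j <> s, s+1.  The
   composite of the substitutions performed so far fixes the variables of the
   rows not yet reached and maps the other variables to polynomials in the rows
   already reached.  Finally, every element vanishes at 0, so the ideal is
   proper. *)

From HB Require Import structures.
From mathcomp Require Import all_boot all_order all_algebra.
From mathcomp Require Import mpoly.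
From mathcomp Require Import zify ring.
Set Implicit Arguments. Unset Strict Implicit. Unset Printing Implicit Defensive.
Import GRing.Theory.
Local Open Scope ring_scope.

Section Ideals.
Variable R : comNzRingType.
Implicit Types (B L P : seq R) (f g x y : R).

Lemma in_idealP L x :
  in_ideal L x <-> exists c : nat -> R, x = \sum_(i < size L) c i * L`_i.
Proof.
split; first by case=> c [_ ->]; exists (nth 0 c).
case=> c ->; exists (mkseq c (size L)); rewrite size_mkseq; split=> //.
by apply: eq_bigr => i _; rewrite nth_mkseq.
Qed.

Lemma in_ideal0 L : in_ideal L 0.
Proof. by apply/in_idealP; exists (fun=> 0); rewrite big1 // => i _; rewrite mul0r. Qed.

Lemma in_idealD L x y : in_ideal L x -> in_ideal L y -> in_ideal L (x + y).
Proof.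
move=> /in_idealP[c ->] /in_idealP[d ->]; apply/in_idealP; exists (fun i => c i + d i).
by rewrite -big_split; apply: eq_bigr => i _; rewrite mulrDl.
Qed.

Lemma in_idealMl L x y : in_ideal L x -> in_ideal L (y * x).
Proof.
move=> /in_idealP[c ->]; apply/in_idealP; exists (fun i => y * c i).
by rewrite mulr_sumr; apply: eq_bigr => i _; rewrite mulrA.
Qed.

Lemma in_idealN L x : in_ideal L x -> in_ideal L (- x).
Proof. by rewrite -mulN1r; apply: in_idealMl. Qed.

Lemma in_idealB L x y : in_ideal L x -> in_ideal L y -> in_ideal L (x - y).
Proof. by move=> hx /in_idealN; apply: in_idealD. Qed.

Lemma mem_in_ideal L x : x \in L -> in_ideal L x.
Proof.
move=> xL; apply/in_idealP; exists (fun i => (i == index x L)%:R).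
rewrite (bigD1 (Ordinal (etrans (index_mem x L) xL))) //= eqxx mul1r nth_index //.
rewrite big1 ?addr0 // => i /negbTE ne_i.
by rewrite -val_eqE /= in ne_i; rewrite ne_i mul0r.
Qed.

Lemma in_ideal_trans L L' x :
  {in L, forall y, in_ideal L' y} -> in_ideal L x -> in_ideal L' x.
Proof.
move=> sub /in_idealP[c ->]; apply: (big_ind (in_ideal L')).
- exact: in_ideal0.
- exact: in_idealD.
- by move=> i _; apply/in_idealMl/sub/mem_nth.
Qed.

Definition regular_mod B f := forall g, in_ideal B (f * g) -> in_ideal B g.

Definition regular_seq_mod B P :=
  forall k, (k < size P)%N -> regular_mod (B ++ take k P) P`_k.

Lemma regular_seq_mod_cons B f P :
  regular_mod B f -> regular_seq_mod (rcons B f) P -> regular_seq_mod B (f :: P).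
Proof.
move=> regf regP [|k] ltk /=; first by rewrite cats0.
by rewrite -cat_rcons; apply: regP.
Qed.

Lemma regular_modM B f g : regular_mod B f -> regular_mod B g -> regular_mod B (f * g).
Proof. by move=> regf regg h; rewrite -mulrA => /regf /regg. Qed.

Lemma regular_modN B f : regular_mod B f -> regular_mod B (- f).
Proof. by move=> regf g; rewrite mulNr -mulrN => /regf /in_idealN; rewrite opprK. Qed.

End Ideals.

Lemma in_ideal_rmorph (R S : comNzRingType) (f : {rmorphism R -> S})
    (L : seq R) (x : R) :
  in_ideal L x -> in_ideal (map f L) (f x).
Proof.
move=> /in_idealP[c ->]; apply/in_idealP; exists (f \o c).
rewrite rmorph_sum size_map; apply: eq_bigr => i _.
by rewrite rmorphM (nth_map 0).
Qed.

Lemma rmorph_in_ideal_eq0 (R S : comNzRingType) (f : {rmorphism R -> S})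
    (L : seq R) (x : R) :
  {in L, forall y, f y = 0} -> in_ideal L x -> f x = 0.
Proof.
move=> fL /in_idealP[c ->]; rewrite rmorph_sum big1 // => i _.
by rewrite rmorphM (fL L`_i) ?mulr0 // mem_nth.
Qed.

Lemma mpoly_ring_ind n (K : nzRingType) (Q : {mpoly K[n]} -> Prop) :
  (forall c, Q c%:MP) -> (forall i, Q 'X_i) ->
  (forall p q, Q p -> Q q -> Q (p + q)) ->
  (forall p q, Q p -> Q q -> Q (p * q)) -> forall p, Q p.
Proof.
move=> QC QX QD QM p; elim/mpolyind: p => [|c e p _ _ Qp].
  by rewrite -mpolyC0.
rewrite -mul_mpolyC mpolyXE_id; apply/QD/Qp/QM => //.
have Q1 : Q 1 by rewrite -mpolyC1.
apply: (big_ind Q) => // i _; elim: (e i) => [|k IH]; first by rewrite expr0.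
by rewrite exprS; apply: QM.
Qed.

(* Locked: otherwise unification unfolds [subst] and tries to evaluate it on
   symbolic polynomials, which is prohibitively slow. *)
HB.lock Definition subst (n z : nat) (a : {mpoly rat[n]}) :
    {rmorphism {mpoly rat[n]} -> {mpoly rat[n]}} :=
  comp_mpoly [tuple if (i : nat) == z then a else 'X_i | i < n].

Section Substitution.
Variable n : nat.
Local Notation R := {mpoly rat[n]}.
Implicit Types (B P : seq R) (a b p q x : R) (c : rat).

Lemma substE z a p :
  subst z a p = comp_mpoly [tuple if (i : nat) == z then a else 'X_i | i < n] p.
Proof. by rewrite subst.unlock. Qed.

Lemma substX z a i : subst z a 'X_i = if (i : nat) == z then a else 'X_i.
Proof. by rewrite substE comp_mpolyXU -tnth_nth tnth_mktuple. Qed.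

Lemma substC z a c : subst z a c%:MP = c%:MP.
Proof. by rewrite substE comp_mpolyC. Qed.

Lemma subst_varX_id z a : (z < n)%N -> subst z a (varX n z) = a.
Proof. by move=> ltzn; rewrite /varX insubT substX eqxx. Qed.

Lemma subst_varX_neq z a k : k != z -> subst z a (varX n k) = varX n k.
Proof.
rewrite /varX; case: insubP => [i _ <- ne_iz|_ _]; last exact: rmorph0.
by rewrite substX (negbTE ne_iz).
Qed.

Lemma subst_subst z a b p : subst z b (subst z a p) = subst z (subst z b a) p.
Proof.
elim/mpoly_ring_ind: p => [c|i|p q ihp ihq|p q ihp ihq].
- by rewrite !substC.
- rewrite [subst z a _]substX [RHS]substX; case: eqP => // /eqP ne.
  by rewrite substX (negbTE ne).
- by rewrite !rmorphD ihp ihq.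
- by rewrite !rmorphM ihp ihq.
Qed.

Lemma subst0_subst w z a p : w != z ->
  subst w 0 (subst z a p) = subst z (subst w 0 a) (subst w 0 p).
Proof.
move=> ne_wz; have ne_zw : z != w by rewrite eq_sym.
elim/mpoly_ring_ind: p => [c|i|p q ihp ihq|p q ihp ihq].
- by rewrite !substC.
- rewrite [subst z a _]substX [subst w 0 'X_i]substX.
  have [iz|ne_iz] := eqVneq (i : nat) z.
    by rewrite iz (negbTE ne_zw) substX iz eqxx.
  have [iw|ne_iw] := eqVneq (i : nat) w; first by rewrite substX iw eqxx rmorph0.
  by rewrite !substX (negbTE ne_iw) (negbTE ne_iz).
- by rewrite !rmorphD ihp ihq.
- by rewrite !rmorphM ihp ihq.
Qed.

Definition indep z p := subst z 0 p = p.

Lemma indep_subst_id z a p : indep z p -> subst z a p = p.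
Proof. by move=> zp; rewrite -zp subst_subst rmorph0. Qed.

Lemma indep_subst w z a p : indep w a -> indep w p -> indep w (subst z a p).
Proof.
move=> wa wp; rewrite /indep; have [<-|ne_wz] := eqVneq w z.
  by rewrite subst_subst wa.
by rewrite subst0_subst // wa wp.
Qed.

Lemma indepD z p q : indep z p -> indep z q -> indep z (p + q).
Proof. by rewrite /indep rmorphD => -> ->. Qed.

Lemma indepM z p q : indep z p -> indep z q -> indep z (p * q).
Proof. by rewrite /indep rmorphM => -> ->. Qed.

Lemma indepN z p : indep z p -> indep z (- p).
Proof. by rewrite /indep rmorphN => ->. Qed.

Lemma indepB z p q : indep z p -> indep z q -> indep z (p - q).
Proof. by move=> zp /indepN; apply: indepD. Qed.

Lemma indep_varX z k : k != z -> indep z (varX n k).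
Proof. exact: subst_varX_neq. Qed.

Lemma sub_subst_dvd z a p : (z < n)%N ->
  exists d, p - subst z a p = (varX n z - a) * d.
Proof.
move=> ltzn; elim/mpoly_ring_ind: p => [c|i|p q [d ed] [e ee]|p q [d ed] [e ee]].
- by exists 0; rewrite substC subrr mulr0.
- rewrite substX; case: eqP => [iz|_]; last by exists 0; rewrite subrr mulr0.
  by exists 1; rewrite mulr1 /varX insubT; congr ('X__ - _); apply: val_inj.
- by exists (d + e); rewrite rmorphD mulrDr -ed -ee opprD addrACA.
- exists (d * q + subst z a p * e).
  by rewrite rmorphM mulrDr mulrA -ed mulrCA -ee mulrBl mulrBr addrA subrK.
Qed.

Lemma in_ideal_sub_subst z a L p : (z < n)%N -> varX n z - a \in L ->
  in_ideal L (p - subst z a p).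
Proof.
move=> ltzn fL; have [d ->] := sub_subst_dvd a p ltzn.
by rewrite mulrC; apply/in_idealMl/mem_in_ideal.
Qed.

Lemma sub_subst_dvd_in_ideal z a B x : (z < n)%N -> {in B, forall b, indep z b} ->
  in_ideal B x -> exists2 y, in_ideal B y & x - subst z a x = (varX n z - a) * y.
Proof.
move=> ltzn zB /in_idealP[c ->].
apply: (big_ind (fun x => exists2 y, in_ideal B y & x - subst z a x = (varX n z - a) * y)).
- by exists 0; [exact: in_ideal0 | rewrite rmorph0 subrr mulr0].
- move=> x1 x2 [y1 By1 e1] [y2 By2 e2]; exists (y1 + y2); first exact: in_idealD.
  by rewrite rmorphD mulrDr -e1 -e2 opprD addrACA.
- move=> i _; have [d ed] := sub_subst_dvd a (c i) ltzn.
  exists (d * B`_i); first by apply/in_idealMl/mem_in_ideal/mem_nth.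
  by rewrite rmorphM (indep_subst_id _ (zB _ (mem_nth 0 (ltn_ord i)))) -mulrBl ed mulrA.
Qed.

Lemma regular_mod_varX_sub z a B : (z < n)%N -> indep z a ->
  {in B, forall b, indep z b} -> regular_mod B (varX n z - a).
Proof.
move=> ltzn za zB g fgB.
have f_neq0 : varX n z - a != 0.
  apply/eqP => /(congr1 (subst z (1 + a))).
  rewrite rmorphB subst_varX_id // (indep_subst_id _ za) addrK rmorph0 => /eqP.
  by rewrite oner_eq0.
have [y By] := sub_subst_dvd_in_ideal a ltzn zB fgB.
rewrite rmorphM rmorphB subst_varX_id // (indep_subst_id _ za) subrr mul0r subr0.
by move/(mulfI f_neq0) ->.
Qed.

Lemma regular_seq_mod_elim z a B P : (z < n)%N -> indep z a ->
  {in B, forall b, indep z b} ->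
  regular_seq_mod B (map (subst z a) P) -> regular_seq_mod B (varX n z - a :: P).
Proof.
move=> ltzn za zB regP; apply: regular_seq_mod_cons; first exact: regular_mod_varX_sub.
set f := varX n z - a; set phi := subst z a.
have phi_f : phi f = 0 by rewrite rmorphB subst_varX_id // (indep_subst_id _ za) subrr.
move=> k ltk g; set I := rcons B f ++ take k P => gI.
have phiI p : in_ideal I (p - phi p).
  by apply: in_ideal_sub_subst => //; rewrite mem_cat mem_rcons mem_head.
(* Modulo I every p is congruent to phi p, and phi maps I into (B, phi (take k P)). *)
suff : in_ideal I (phi g) by move/(in_idealD (phiI g)); rewrite subrK.
have ltk' : (k < size (map phi P))%N by rewrite size_map.
have /(regP k ltk') : in_ideal (B ++ take k (map phi P)) ((map phi P)`_k * phi g).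
  move: (in_ideal_rmorph phi gI); rewrite rmorphM (nth_map 0) //.
  apply: in_ideal_trans => y; rewrite map_cat map_rcons phi_f -map_take.
  rewrite mem_cat mem_rcons in_cons => /orP[/orP[/eqP->|/mapP[b bB ->]]|yP].
  - exact: in_ideal0.
  - by rewrite (indep_subst_id _ (zB b bB)); apply: mem_in_ideal; rewrite mem_cat bB.
  - by apply: mem_in_ideal; rewrite mem_cat yP orbT.
apply: in_ideal_trans => y; rewrite mem_cat => /orP[yB|].
  by apply: mem_in_ideal; rewrite mem_cat mem_rcons in_cons yB orbT.
rewrite -map_take => /mapP[p pP ->]; rewrite -[phi p](subKr p).
by apply: in_idealB (phiI p); apply: mem_in_ideal; rewrite mem_cat pP orbT.
Qed.

Lemma regular_seq_mod_pair z y p0 p1 B P : (z < n)%N -> (y < n)%N -> y != z ->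
  indep z p0 -> indep z p1 -> indep y p0 -> indep y p1 ->
  {in B, forall b, indep z b} -> {in B, forall b, indep y b} ->
  regular_seq_mod (rcons B (- ((varX n y - p0) * (varX n y - p1))))
    (map (subst z (p0 + p1 - varX n y)) P) ->
  regular_seq_mod B
    [:: varX n z + varX n y - p0 - p1, varX n z * varX n y - p0 * p1 & P].
Proof.
move=> ltzn ltyn ne_yz z_p0 z_p1 y_p0 y_p1 z_B y_B regP.
set a := p0 + p1 - varX n y.
have -> : varX n z + varX n y - p0 - p1 = varX n z - a by rewrite /a; ring.
apply: regular_seq_mod_elim => //.
  by apply: indepB; [apply: indepD | apply: indep_varX].
rewrite /= rmorphB !rmorphM subst_varX_id // subst_varX_neq // !indep_subst_id //.
have -> : a * varX n y - p0 * p1 = - ((varX n y - p0) * (varX n y - p1)) by rewrite /a; ring.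
apply: regular_seq_mod_cons => //.
by apply/regular_modN/regular_modM; apply: regular_mod_varX_sub.
Qed.

End Substitution.

Section Triangular.
Variable n : nat.
Local Notation R := {mpoly rat[n]}.
Implicit Types (B P : seq R) (a p q : R) (th : {rmorphism R -> R}).

Definition below T p := forall z, (T <= z)%N -> indep z p.

Lemma below_le T T' p : (T <= T')%N -> below T p -> below T' p.
Proof. by move=> leTT' Tp z leT'z; apply/Tp/(leq_trans leTT'). Qed.

Lemma below_varX T k : (k < T)%N -> below T (varX n k).
Proof. by move=> ltkT z leTz; apply: indep_varX; rewrite neq_ltn (leq_trans ltkT leTz). Qed.

Lemma belowD T p q : below T p -> below T q -> below T (p + q).
Proof. by move=> Tp Tq z leTz; apply: indepD; [apply: Tp | apply: Tq]. Qed.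

Lemma belowM T p q : below T p -> below T q -> below T (p * q).
Proof. by move=> Tp Tq z leTz; apply: indepM; [apply: Tp | apply: Tq]. Qed.

Lemma belowN T p : below T p -> below T (- p).
Proof. by move=> Tp z leTz; apply/indepN/Tp. Qed.

Lemma belowB T p q : below T p -> below T q -> below T (p - q).
Proof. by move=> Tp /belowN; apply: belowD. Qed.

Lemma below_subst T z a p : below T a -> below T p -> below T (subst z a p).
Proof. by move=> Ta Tp w leTw; apply: indep_subst; [apply: Ta | apply: Tp]. Qed.

Definition triangular T th :=
  (forall k, (T <= k)%N -> th (varX n k) = varX n k) /\
  (forall k, (k < T)%N -> below T (th (varX n k))).

Lemma triangular_id T : triangular T idfun.
Proof. by split=> // k; apply: below_varX. Qed.

Lemma triangular_le T T' th : (T <= T')%N -> triangular T th -> triangular T' th.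
Proof.
move=> leTT' [th_fix th_below]; split=> k hk; first exact/th_fix/(leq_trans leTT').
have [ltkT|leTk] := ltnP k T; first exact: below_le (th_below _ ltkT).
by rewrite th_fix //; apply: below_varX.
Qed.

Lemma triangular_subst T z a th : (z < T)%N -> below T a ->
  triangular T th -> triangular T (subst z a \o th).
Proof.
move=> ltzT Ta [th_fix th_below]; split=> k hk /=.
  by rewrite th_fix // subst_varX_neq // neq_ltn (leq_trans ltzT hk) orbT.
exact/below_subst/th_below.
Qed.

Lemma regular_seq_mod_elim_vars T th B (J : seq nat) (zf : nat -> nat) (af : nat -> R) P :
  (T <= n)%N -> triangular T th ->
  uniq (map zf J) -> {in J, forall j, zf j < T}%N ->
  {in J, forall j, below T (af j)} -> {in J &, forall j j', indep (zf j') (af j)} ->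
  {in B, forall b, {in J, forall j, indep (zf j) b}} ->
  (forall th', triangular T th' -> regular_seq_mod B (map th' P)) ->
  regular_seq_mod B ([seq varX n (zf j) - af j | j <- J] ++ map th P).
Proof.
elim: J th => [|j J IH] th leTn thT /= uzJ zJ aJ azJ BzJ regP; first exact: regP.
case/andP: uzJ => zj_notin uzJ; have jJ : j \in j :: J := mem_head j J.
apply: regular_seq_mod_elim.
- exact: leq_trans (zJ j jJ) leTn.
- exact: azJ.
- by move=> b bB; apply: BzJ.
rewrite map_cat; have -> : map (subst (zf j) (af j)) [seq varX n (zf j') - af j' | j' <- J] =
          [seq varX n (zf j') - af j' | j' <- J].
  rewrite -map_comp; apply/eq_in_map => j' j'J /=.
  rewrite rmorphB subst_varX_neq; last by apply: contraNneq zj_notin => <-; apply: map_f.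
  by rewrite (indep_subst_id _ (azJ j' j _ jJ)) // inE j'J orbT.
rewrite -map_comp; apply: IH => //.
- by apply: triangular_subst => //; [apply: zJ | apply: aJ].
- by move=> j' j'J; apply: zJ; rewrite inE j'J orbT.
- by move=> j' j'J; apply: aJ; rewrite inE j'J orbT.
- by move=> j1 j2 j1J j2J; apply: azJ; rewrite inE ?j1J ?j2J orbT.
- by move=> b bB j' j'J; apply: BzJ; rewrite // inE j'J orbT.
Qed.

End Triangular.

Section WideEdges.
Variables (m r : nat) (s : nat -> nat).
Hypothesis s_range : forall i, (1 <= i <= r)%N -> (1 <= s i <= m - 1)%N.
Local Notation n := (r.+1 * m)%N.
Local Notation R := {mpoly rat[n]}.

Definition regular_from T (P : seq R) := forall (th : {rmorphism R -> R}) B,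
  triangular T th -> {in B, forall b, below T b} -> regular_seq_mod B (map th P).

Lemma row_end_le i : (i < r)%N -> (i.+2 * m <= n)%N.
Proof. by move=> ltir; rewrite leq_mul2r ltnS ltir orbT. Qed.

Lemma regular_from_row_diffs i (J : seq nat) th B P : (i < r)%N ->
  uniq J -> {in J, forall j, 1 <= j <= m}%N -> triangular (i.+2 * m) th ->
  {in J, forall j, th (xv r m i.+1 j) = xv r m i.+1 j} ->
  {in J, forall j, below (i.+1 * m) (th (xv r m i j))} ->
  {in B, forall b, below (i.+2 * m) b} ->
  {in B, forall b, {in J, forall j, indep (i.+1 * m + (j - 1)) b}} ->
  regular_from (i.+2 * m) P ->
  regular_seq_mod B (map th ([seq xv r m i.+1 j - xv r m i j | j <- J] ++ P)).
Proof.
move=> /row_end_le le_i2m_n uJ J_m thT th_new th_old BT BJ regP.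
rewrite map_cat -map_comp.
have -> : [seq (th \o (fun j => xv r m i.+1 j - xv r m i j)) j | j <- J] =
          [seq varX n (i.+1 * m + (j - 1)) - th (xv r m i j) | j <- J].
  by apply/eq_in_map => j jJ /=; rewrite rmorphB th_new.
apply: (regular_seq_mod_elim_vars (T := i.+2 * m)) => //.
- rewrite map_inj_in_uniq // => j j' /J_m j_m /J_m j'_m; lia.
- by move=> j /J_m; lia.
- by move=> j jJ; apply: below_le (th_old j jJ); lia.
- by move=> j j' jJ /J_m j'_m; apply: th_old; lia.
- by move=> th' th'T; apply: regP.
Qed.

Lemma regular_from_block i P : (i < r)%N ->
  regular_from (i.+2 * m) P -> regular_from (i.+1 * m) (block r m s i.+1 ++ P).
Proof.
move=> ltir regP th B thT BT; have [th_fix th_below] := thT.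
have /andP[t_ge1 t_lt] : (1 <= s i.+1 <= m - 1)%N by apply: s_range; lia.
set t := s i.+1 in t_ge1 t_lt *.
(* x_z = x_{i+1,t} and x_y = x_{i+1,t+1}; p0, p1 are the images of x_{i,t}, x_{i,t+1}. *)
set z := (i.+1 * m + (t - 1))%N; set y := (i.+1 * m + t)%N.
set p0 := th (varX n (i * m + (t - 1))); set p1 := th (varX n (i * m + t)).
have xv_new j : th (xv r m i.+1 j) = xv r m i.+1 j by apply: th_fix; lia.
have p0T : below (i.+1 * m) p0 by apply: th_below; lia.
have p1T : below (i.+1 * m) p1 by apply: th_below; lia.
have le_i1_i2 : (i.+1 * m <= i.+2 * m)%N by lia.
have le_i2m_n := row_end_le ltir.
have yT : below (i.+2 * m) (varX n y) by apply: below_varX; lia.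
rewrite /block /= -/t !rmorphB rmorphD !rmorphM !xv_new /xv subSS subn0 -/p0 -/p1 -/z -/y.
apply: regular_seq_mod_pair; try by [lia | apply: p0T; lia | apply: p1T; lia].
- by move=> b /BT; apply; lia.
- by move=> b /BT; apply; lia.
set J := [seq j <- iota 1 m | (j != t) && (j != t.+1)].
have memJ j : j \in J -> [/\ j != t, j != t.+1, (1 <= j)%N & (j <= m)%N].
  by rewrite mem_filter mem_iota => /andP[/andP[-> ->] /andP[-> ?]]; split=> //; lia.
rewrite -map_comp; apply: regular_from_row_diffs => //.
- by rewrite filter_uniq ?iota_uniq.
- by move=> j /memJ[_ _ -> ->].
- apply: triangular_subst; [lia | | apply: triangular_le thT; lia].
  by apply: belowB => //; apply: belowD; apply: below_le le_i1_i2 _.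
- by move=> j /memJ[jt _ j1 jm] /=; rewrite xv_new subst_varX_neq //; lia.
- move=> j /memJ[_ _ j1 jm].
  have old_j : below (i.+1 * m) (th (xv r m i j)) by apply: th_below; lia.
  by rewrite /= (indep_subst_id _ (old_j z _)) //; lia.
- move=> b; rewrite mem_rcons in_cons => /orP[/eqP ->|/BT]; last exact: below_le.
  by apply: belowN; apply: belowM; apply: belowB => //; apply: below_le le_i1_i2 _.
- move=> b; rewrite mem_rcons in_cons => /orP[/eqP ->|/BT bT] j /memJ[_ jt1 j1 jm].
    have j_y : indep (i.+1 * m + (j - 1)) (varX n y) by apply: indep_varX; lia.
    by apply: indepN; apply: indepM; apply: indepB => //; [apply: p0T | apply: p1T]; lia.
  by apply: bT; lia.
Qed.

Lemma regular_from_blocks k i : (i + k = r)%N ->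
  regular_from (i.+1 * m) (flatten [seq block r m s j | j <- iota i.+1 k]).
Proof.
elim: k i => [|k IH] i ikr; first by move=> th B _ _ [].
by apply: regular_from_block; [lia | apply: IH; lia].
Qed.

End WideEdges.

Lemma meval0_varX n k : (varX n k).@[fun=> 0] = 0.
Proof. by rewrite /varX; case: insubP => [i _ _|_]; rewrite ?mevalXU ?meval0. Qed.

Lemma the_sequence_eval0 m r s : {in the_sequence r m s, forall x, x.@[fun=> 0] = 0}.
Proof.
move=> x /flattenP[_ /mapP[i _ ->]]; rewrite /block mem_cat !inE.
case/orP => [/orP[]/eqP->|/mapP[j _ ->]]; rewrite /xv;
  by rewrite ?(mevalB, mevalD, mevalM, meval0_varX) ?subrr ?mul0r.
Qed.

Theorem mainTheorem1 (m r : nat) (s : nat -> nat)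
  (hm : (2 <= m)%N) (hr : (1 <= r)%N)
  (hs : forall i : nat, (1 <= i <= r)%N -> (1 <= s i <= m - 1)%N) :
  regular_seq (the_sequence r m s).
Proof.
split.
- have := @regular_from_blocks m r s hs r 0 (add0n r) idfun [::] (triangular_id _ _).
  by rewrite map_id; apply.
- move/(rmorph_in_ideal_eq0 (@the_sequence_eval0 m r s)).
  by rewrite rmorph1 => /eqP; rewrite oner_eq0.
Qed.
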